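(* For every positive integer $n$ there exists a permutation of length $2n-1$ that contains every riffle shuffle permutation of length $n$ as a pattern, and there exists a permutation of length $2n-1$ that contains every antiriffle shuffle permutation of length $n$ as a pattern.
   Context: A permutation $\pi$ of length $k$ is a pattern of (is contained in) a permutation $\sigma$ if there are indices $\ell_1<\ell_2<\cdots<\ell_k$ such that for all $i,j$, $\pi_i<\pi_j$ if and only if $\sigma_{\ell_i}<\sigma_{\ell_j}$. The riffle shuffle permutations are the permutations avoiding (not containing as a pattern) each of $321$, $2143$ and $2413$; equivalently, permutations of $\{1,\dots,n\}$ obtained by interleaving the increasing sequences $1,2,\dots,k-1$ and $k,\dots,n$ for some $k$. An antiriffle shuffle permutation is a permutation whose inverse is a riffle shuffle permutation. *)

From mathcomp Require Import all_boot all_fingroup.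
Set Implicit Arguments. Unset Strict Implicit. Unset Printing Implicit Defensive.

(* A permutation sigma : 'S_m is identified with its one-line word
   i |-> val (sigma i) (values 0..m-1 instead of 1..m; patterns only
   depend on relative order). *)

Definition contains_word (k m : nat) (p : 'I_k -> nat) (s : 'I_m -> nat) : Prop :=
  exists f : 'I_k -> 'I_m,
    (forall i j : 'I_k, i < j -> f i < f j) /\
    (forall i j : 'I_k, p i < p j <-> s (f i) < s (f j)).

Definition perm_word (m : nat) (s : 'S_m) : 'I_m -> nat := fun i => val (s i).

Definition contains (k m : nat) (pi : 'S_k) (sigma : 'S_m) : Prop :=
  contains_word (perm_word pi) (perm_word sigma).

Arguments contains_word : clear implicits.
Arguments contains_word {k m} p s.
Definition pat (w : seq nat) : 'I_(size w) -> nat := fun i => nth 0 w i.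

Arguments pat : clear implicits.
Definition avoids_pat (m : nat) (w : seq nat) (sigma : 'S_m) : Prop :=
  ~ @contains_word (size w) m (pat w) (perm_word sigma).

Definition riffle (m : nat) (sigma : 'S_m) : Prop :=
  avoids_pat [:: 3; 2; 1] sigma /\
  avoids_pat [:: 2; 1; 4; 3] sigma /\
  avoids_pat [:: 2; 4; 1; 3] sigma.

Definition antiriffle (m : nat) (sigma : 'S_m) : Prop := riffle (sigma^-1)%g.

From mathcomp Require Import all_boot all_fingroup.
From mathcomp Require Import zify.

(* A riffle shuffle of length n interleaves the increasing runs of values
   below and above some threshold k: the 321-, 2143- and 2413-avoidance says
   exactly that the smaller entry of any inversion lies below the larger entry
   of any other inversion.  Such a permutation embeds into the perfect shuffle
   0, n, 1, n+1, ..., n-1 of length 2n-1, whose even slots carry the increasing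
   values 0..n-1 and odd slots the increasing values n..2n-2: place its
   positions greedily, a small value on the next even slot and a large one on
   the next odd slot.  Pattern containment commutes with inversion, which
   gives the antiriffle case with the inverse perfect shuffle. *)

Lemma contains_invg k m (pi : 'S_k) (sigma : 'S_m) :
  contains pi sigma -> contains pi^-1%g sigma^-1%g.
Proof.
case=> f [f_mono f_pat]; rewrite /perm_word in f_pat.
exists (fun v => sigma (f (pi^-1%g v))); split=> [u v uv | u v].
  by have := f_pat (pi^-1%g u) (pi^-1%g v); rewrite !permKV => <-.
rewrite /perm_word !permK; split; first exact: f_mono.
case: (ltngtP (pi^-1%g u) (pi^-1%g v)) => [//|vu|/val_inj ->]; last by rewrite ltnn.
(* Generalizing the two images keeps [Qed] from unfolding the permutations. *)
move: (f_mono _ _ vu); move: (f _) (f _) => a b ba ab.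
by have := ltn_trans ab ba; rewrite ltnn.
Qed.

Lemma eq_lt_word m (s t : 'I_m -> nat) : injective s -> injective t ->
  (forall x y : 'I_m, x < y -> (s x < s y) = (t x < t y)) ->
  forall x y : 'I_m, (s x < s y) = (t x < t y).
Proof.
move=> s_inj t_inj st x y.
case: (ltngtP x y) => [|yx|/val_inj ->]; [exact: st | | by rewrite !ltnn].
have yNx : (y == x) = false by rewrite -val_eqE; apply: ltn_eqF.
rewrite (ltnNge (s x)) (ltnNge (t x)) (leq_eqVlt (s y)) (leq_eqVlt (t y)).
by rewrite (inj_eq s_inj) (inj_eq t_inj) yNx st.
Qed.

Lemma perm_word_inj m (s : 'S_m) : injective (perm_word s).
Proof. by move=> x y /val_inj/perm_inj. Qed.

Definition interleaves (k : nat) {n : nat} (p : 'S_n) : Prop :=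
  forall i j : 'I_n, i < j -> (p i < k) = (p j < k) -> p i < p j.

Lemma interleaves_ltE n k (p : 'S_n) (i j : 'I_n) : interleaves k p -> i < j ->
  (p i < p j) = (p i < k) || ~~ (p j < k).
Proof.
move=> p_int ij.
by case: (ltnP (p i) k) => hi; case: (ltnP (p j) k) => hj /=;
  [apply: p_int => //; lia | lia | lia | apply: p_int => //; lia].
Qed.

Section RiffleStructure.
Variables (n : nat) (p : 'S_n).
Local Notation v i := (nat_of_ord (p i)).

Lemma avoids_pat321 : avoids_pat [:: 3; 2; 1] p ->
  forall a b c : 'I_n, ~ (a < b /\ b < c /\ v c < v b /\ v b < v a).
Proof.
move=> p_avoids a b c [? [? [? ?]]]; apply: p_avoids.
exists (fun x : 'I_3 => nth a [:: a; b; c] x); split; rewrite /perm_word /pat.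
  by move=> [[|[|[|x]]] ?] [[|[|[|y]]] ?] //=; lia.
by move=> [[|[|[|x]]] ?] [[|[|[|y]]] ?] //=; lia.
Qed.

Lemma avoids_pat2143 : avoids_pat [:: 2; 1; 4; 3] p ->
  forall a b c d : 'I_n,
  ~ (a < b /\ b < c /\ c < d /\ v b < v a /\ v a < v d /\ v d < v c).
Proof.
move=> p_avoids a b c d [? [? [? [? [? ?]]]]]; apply: p_avoids.
exists (fun x : 'I_4 => nth a [:: a; b; c; d] x); split; rewrite /perm_word /pat.
  by move=> [[|[|[|[|x]]]] ?] [[|[|[|[|y]]]] ?] //=; lia.
by move=> [[|[|[|[|x]]]] ?] [[|[|[|[|y]]]] ?] //=; lia.
Qed.

Lemma avoids_pat2413 : avoids_pat [:: 2; 4; 1; 3] p ->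
  forall a b c d : 'I_n,
  ~ (a < b /\ b < c /\ c < d /\ v c < v a /\ v a < v d /\ v d < v b).
Proof.
move=> p_avoids a b c d [? [? [? [? [? ?]]]]]; apply: p_avoids.
exists (fun x : 'I_4 => nth a [:: a; b; c; d] x); split; rewrite /perm_word /pat.
  by move=> [[|[|[|[|x]]]] ?] [[|[|[|[|y]]]] ?] //=; lia.
by move=> [[|[|[|[|x]]]] ?] [[|[|[|[|y]]]] ?] //=; lia.
Qed.

Lemma riffle_inversion_lt (i j i' j' : 'I_n) : riffle p ->
  i < j -> v j < v i -> i' < j' -> v j' < v i' -> v j < v i'.
Proof.
move=> [no321 [no2143 no2413]] ij ji i'j' j'i'.
have := avoids_pat321 no321 i j j'; have := avoids_pat321 no321 i i' j'.
have := avoids_pat2413 no2413 i' i j' j; have := avoids_pat2143 no2143 i' j' i j.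
(* Otherwise i, j, i', j' would form a 321, 2143 or 2413. *)
have val_eq (a b : 'I_n) : a = b :> nat -> v a = v b by move=> /val_inj ->.
have := val_eq i i'; have := val_eq i j'; have := val_eq j i'; have := val_eq j j'.
have : v i' = v j -> i' = j :> nat by move=> /val_inj/perm_inj ->.
lia.
Qed.

Lemma riffle_interleaves : riffle p -> exists2 k, 0 < k & interleaves k p.
Proof.
move=> p_riffle.
(* k - 1 is the largest value at the bottom of an inversion: by
   riffle_inversion_lt every value at the top of an inversion is at least k. *)
set M := \max_(j : 'I_n | [exists i : 'I_n, (i < j) && (v j < v i)]) (v j).+1.
exists (maxn 1 M) => [|i j ij same_side]; first exact: leq_maxl.
case: (ltngtP (v i) (v j)) => [// | ji | /val_inj/perm_inj ij_eq]; last first.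
  by move: ij; rewrite ij_eq ltnn.
have jM : (v j).+1 <= M.
  apply: (@leq_bigmax_cond _ _ (fun j => (v j).+1) j).
  by apply/existsP; exists i; rewrite ij ji.
have Mi : M <= v i.
  apply/bigmax_leqP => j' /existsP [i' /andP [i'j' j'i']].
  exact: (riffle_inversion_lt i' j' i j p_riffle i'j' j'i' ij ji).
by move: same_side; lia.
Qed.
End RiffleStructure.

(* The word 0, n, 1, n+1, ..., n-1 of the perfect shuffle. *)
Definition shuffle_val (n q : nat) : nat := if odd q then n + q./2 else q./2.

Lemma shuffle_val_lt n q : q < 2 * n - 1 -> shuffle_val n q < 2 * n - 1.
Proof.
rewrite /shuffle_val; have := odd_double_half q; rewrite -muln2.
by case: (odd q) => /=; lia.
Qed.

Lemma shuffle_val_ltE n a b : a < b -> b < 2 * n - 1 ->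
  (shuffle_val n a < shuffle_val n b) = ~~ odd a || odd b.
Proof.
rewrite /shuffle_val => ab b_lt.
have := odd_double_half a; have := odd_double_half b; rewrite -!muln2.
by case: (odd a); case: (odd b) => /= ha hb; apply/idP/idP; lia.
Qed.

Definition shuffle_ord n (q : 'I_(2 * n - 1)) : 'I_(2 * n - 1) :=
  Ordinal (@shuffle_val_lt n q (ltn_ord q)).

Lemma shuffle_ord_inj n : injective (@shuffle_ord n).
Proof.
move=> x y /(congr1 val); rewrite /= /shuffle_val => eq_val; apply: val_inj.
have := ltn_ord x; have := ltn_ord y.
have := odd_double_half x; have := odd_double_half y; rewrite -!muln2.
by move: eq_val; case: (odd x); case: (odd y) => /=; lia.
Qed.

Definition perfect_shuffle n : 'S_(2 * n - 1) := perm (@shuffle_ord_inj n).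

Section GreedyPositions.
Variable lab : nat -> bool.

(* Increasing placement of positions 0, 1, ... on slots of the parity
   ~~ lab i, each on the first admissible slot. *)
Fixpoint greedy_pos i : nat :=
  if i is i'.+1 then greedy_pos i' + (if lab i' == lab i'.+1 then 2 else 1)
  else ~~ lab 0.

Lemma greedy_pos_mono : {homo greedy_pos : i j / i < j}.
Proof. by apply: homo_ltn => [? ? ?|i /=]; [exact: ltn_trans | case: (_ == _); lia]. Qed.

Lemma odd_greedy_pos i : odd (greedy_pos i) = ~~ lab i.
Proof.
elim: i => [|i IHi] /=; first by case: (lab 0).
by rewrite oddD IHi; case: (lab i); case: (lab i.+1).
Qed.

Lemma greedy_pos_leq i : greedy_pos i <= i.*2.+1.
Proof. by elim: i => [|i IHi] /=; [case: (lab 0) | case: (_ == _); lia]. Qed.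

Lemma greedy_pos_leq_double i t : t <= i -> lab t -> greedy_pos i <= i.*2.
Proof.
elim: i t => [|i IHi] t; first by rewrite leqn0 => /eqP -> /= ->.
rewrite leq_eqVlt => /predU1P [-> lab_t | t_le] /=.
  have := greedy_pos_leq i; case lab_i: (lab i).
    by have := IHi i (leqnn i) lab_i; rewrite lab_t /=; lia.
  by rewrite lab_t /=; lia.
by move=> /(IHi t t_le); case: (_ == _); lia.
Qed.
End GreedyPositions.

Lemma interleaves_contained n k (p : 'S_n) : 0 < k -> interleaves k p ->
  contains p (perfect_shuffle n).
Proof.
move=> k_gt0 p_int.
pose lab t := [exists i : 'I_n, (i == t :> nat) && (p i < k)].
have labE (i : 'I_n) : lab i = (p i < k).
  by apply/existsP/idP => [[i' /andP [/eqP/val_inj -> //]] | ?]; exists i; rewrite eqxx.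
have pos_lt (i : 'I_n) : greedy_pos lab i < 2 * n - 1.
  (* Value 0 is below k, so some position gets an even slot. *)
  have n_gt0 : 0 < n := leq_ltn_trans (leq0n i) (ltn_ord i).
  set t := p^-1%g (Ordinal n_gt0).
  have lab_t : lab t by rewrite labE permKV.
  have t_le : t <= n.-1 by have := ltn_ord t; lia.
  have i_le : greedy_pos lab i <= greedy_pos lab n.-1.
    by rewrite (leq_mono (greedy_pos_mono lab)); have := ltn_ord i; lia.
  by have := @greedy_pos_leq_double lab _ _ t_le lab_t; lia.
pose f i := Ordinal (pos_lt i).
have f_inj : injective f.
  by move=> x y /(congr1 val)/(incn_inj (leq_mono (greedy_pos_mono lab)))/val_inj.
exists f; split=> [i j|]; first exact: greedy_pos_mono.
move=> i j; rewrite (@eq_lt_word _ _ (perm_word (perfect_shuffle n) \o f)) //.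
- exact: perm_word_inj.
- by move=> x y /perm_word_inj/f_inj.
- move=> x y xy; rewrite /perm_word /= !permE /= shuffle_val_ltE ?greedy_pos_mono //.
  by rewrite !odd_greedy_pos negbK !labE -interleaves_ltE.
Qed.

Lemma riffle_contained n (p : 'S_n) : riffle p -> contains p (perfect_shuffle n).
Proof. by case/riffle_interleaves=> k; apply: interleaves_contained. Qed.

Theorem theorem1 (n : nat) (hn : 0 < n) :
  (exists sigma : 'S_(2 * n - 1),
      forall pi : 'S_n, riffle pi -> contains pi sigma) /\
  (exists sigma : 'S_(2 * n - 1),
      forall pi : 'S_n, antiriffle pi -> contains pi sigma).
Proof.
split; first by exists (perfect_shuffle n) => pi; apply: riffle_contained.
exists (perfect_shuffle n)^-1%g => pi /riffle_contained/contains_invg.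
by rewrite invgK.
Qed.
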